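(* Let $\mathbb N$ be a strongly connected symmetric directed graph on $m$ vertices without self-arcs, with arc matrices $C_{ij}$ (each with $n$ columns, orthonormal rows) such that $\bar{\mathbb N}$ is well-configured. Let $\mathbb N(0),\mathbb N(1),\dots$ be a sequence of symmetric spanning subgraphs of $\mathbb N$ such that every arc of $\mathbb N$ belongs to $\mathbb N(t)$ for infinitely many $t$. Let $\mathcal N_i(t)$ be the neighbor set of $i$ in $\mathbb N(t)$, $d_i(t)=|\mathcal N_i(t)|$, and $w_{ij}(t)=1/(1+\max\{d_i(t),d_j(t)\})$ for $j\in\mathcal N_i(t)$. For arbitrary $x_i(0)\in\mathbb R^n$, define $$x_i(t+1)=x_i(t)-\frac12\sum_{j\in\mathcal N_i(t)}w_{ij}(t)\big(C_{ij}'C_{ij}+C_{ji}'C_{ji}\big)\big(x_i(t)-x_j(t)\big).$$ Then there exists $x^*\in\mathbb R^n$ with $x_i(t)\to x^*$ as $t\to\infty$ for all $i$.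
   Context: A directed graph is symmetric if whenever $(i,j)$ is an arc so is $(j,i)$. A spanning subgraph of $\mathbb N$ has the same vertex set and a subset of the arcs. Each arc $(j,i)$ of $\mathbb N$ carries a real matrix $C_{ji}$ with $n$ columns; $'$ denotes transpose. $\bar{\mathbb N}$ is well-configured if for all $x_1,\dots,x_m\in\mathbb R^n$, $C_{ji}x_i=C_{ji}x_j$ for every arc $(j,i)$ of $\mathbb N$ implies $x_1=\cdots=x_m$. *)

From HB Require Import structures.
From mathcomp Require Import all_boot all_order all_algebra.
From mathcomp Require Import all_classical all_reals all_analysis.
Set Implicit Arguments. Unset Strict Implicit. Unset Printing Implicit Defensive.
Import Order.TTheory GRing.Theory Num.Theory.
Local Open Scope ring_scope.

(* A directed graph on vertices 'I_m is a relation e; e j i means (j,i) is an arc. *)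
Definition symmetric_graph (m : nat) (e : rel 'I_m) : Prop :=
  forall i j, e i j -> e j i.

Definition no_self_arcs (m : nat) (e : rel 'I_m) : Prop :=
  forall i, ~~ e i i.

Definition strongly_connected (m : nat) (e : rel 'I_m) : Prop :=
  forall i j, connect e i j.

Definition spanning_subgraph (m : nat) (f e : rel 'I_m) : Prop :=
  forall i j, f i j -> e i j.

(* Arc (j,i) carries C j i : 'M_(r j i, n). *)
Definition well_configured (R : realType) (m n : nat) (e : rel 'I_m)
  (r : 'I_m -> 'I_m -> nat) (C : forall i j : 'I_m, 'M[R]_(r i j, n)) : Prop :=
  forall x : 'I_m -> 'cV[R]_n,
    (forall j i, e j i -> C j i *m x i = C j i *m x j) ->
    forall i j, x i = x j.

Definition orthonormal_rows (R : realType) (k n : nat) (A : 'M[R]_(k, n)) : Prop :=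
  A *m A^T = 1%:M.

Definition neighbors (m : nat) (f : rel 'I_m) (i : 'I_m) : {set 'I_m} :=
  [set j | f i j].

Definition degree (m : nat) (f : rel 'I_m) (i : 'I_m) : nat := #|neighbors f i|.

Definition weight (R : realType) (m : nat) (f : rel 'I_m) (i j : 'I_m) : R :=
  (1 + (maxn (degree f i) (degree f j))%:R)^-1.

From HB Require Import structures.
From mathcomp Require Import all_boot all_order all_algebra.
From mathcomp Require Import all_classical all_reals all_analysis.
From mathcomp Require Import ring lra.
Import Order.TTheory GRing.Theory Num.Theory.
Import numFieldNormedType.Exports.
Local Open Scope ring_scope.

Set Implicit Arguments. Unset Strict Implicit. Unset Printing Implicit Defensive.

(* The energy [V(t) = sum_i |x_i(t)|^2] is a Lyapunov function: one step lowers it by at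
   least [wmin] times the Laplacian form, because every weight is at least
   [wmin = 1/(1+m)] while the weights at a vertex sum to at most [1 - wmin]; and the form
   dominates [|C_ij (x_i - x_j)|^2] on every active arc. Hence [x] is bounded, has a cluster
   point [p], and the energy drops tend to 0. If [C_ij p_i = C_ij p_j] on the arcs active
   at time [t], then [x - p] obeys the same recursion at that step, so its energy does not
   increase. Starting from a time where [x] is close to [p] and the drops are small, an
   induction shows that every arc active from then on has this property; as each arc of
   [N] is active infinitely often, [p] is constant by well-configuredness, and the energy
   of [x - p], nonincreasing and small along a subsequence, tends to 0. *)

Lemma ler_sum_term (R : numDomainType) (I : finType) (P : pred I) (F : I -> R) i0 :
  P i0 -> (forall i, P i -> 0 <= F i) -> F i0 <= \sum_(i | P i) F i.
Proof.
move=> Pi0 F_ge0; rewrite (bigD1 i0) //= lerDl.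
by apply: sumr_ge0 => i /andP[Pi _]; exact: F_ge0.
Qed.

Section InnerProduct.
Variables (R : realFieldType) (n : nat).
Implicit Types u v w : 'cV[R]_n.

Definition dotv u v : R := (u^T *m v) 0 0.
Definition sqnorm u : R := dotv u u.

Lemma dotvE u v : dotv u v = \sum_k u k 0 * v k 0.
Proof. by rewrite /dotv mxE; apply: eq_bigr => k _; rewrite mxE. Qed.

Lemma dotvC u v : dotv u v = dotv v u.
Proof. by rewrite !dotvE; apply: eq_bigr => k _; rewrite mulrC. Qed.

Lemma dotvDr u v w : dotv w (u + v) = dotv w u + dotv w v.
Proof. by rewrite /dotv mulmxDr mxE. Qed.

Lemma dotvDl u v w : dotv (u + v) w = dotv u w + dotv v w.
Proof. by rewrite dotvC dotvDr !(dotvC w). Qed.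

Lemma dotvZr a u v : dotv u (a *: v) = a * dotv u v.
Proof. by rewrite /dotv -scalemxAr mxE. Qed.

Lemma dotvZl a u v : dotv (a *: u) v = a * dotv u v.
Proof. by rewrite dotvC dotvZr dotvC. Qed.

Lemma dotvNr u v : dotv u (- v) = - dotv u v.
Proof. by rewrite -scaleN1r dotvZr mulN1r. Qed.

Lemma dotvNl u v : dotv (- u) v = - dotv u v.
Proof. by rewrite dotvC dotvNr dotvC. Qed.

Lemma dotvBl u v w : dotv (u - v) w = dotv u w - dotv v w.
Proof. by rewrite dotvDl dotvNl. Qed.

Lemma dotv_sumr (I : finType) (P : pred I) (z : I -> 'cV[R]_n) v :
  dotv v (\sum_(j | P j) z j) = \sum_(j | P j) dotv v (z j).
Proof. by rewrite /dotv mulmx_sumr summxE. Qed.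

Lemma dotv_suml (I : finType) (P : pred I) (z : I -> 'cV[R]_n) v :
  dotv (\sum_(j | P j) z j) v = \sum_(j | P j) dotv (z j) v.
Proof. by rewrite dotvC dotv_sumr; apply: eq_bigr => j _; rewrite dotvC. Qed.

Lemma sqnorm_ge0 u : 0 <= sqnorm u.
Proof. by rewrite /sqnorm dotvE; apply: sumr_ge0 => k _; rewrite -expr2 sqr_ge0. Qed.

Lemma sqnorm_eq0 u : (sqnorm u == 0) = (u == 0).
Proof.
apply/idP/eqP => [|->]; last by rewrite /sqnorm dotvE big1 // => k _; rewrite mxE mul0r.
rewrite /sqnorm dotvE psumr_eq0 => [/allP u0|k _]; last by rewrite -expr2 sqr_ge0.
apply/matrixP => k j; rewrite (ord1 j) mxE.
by have /implyP/(_ isT) := u0 k (mem_index_enum k); rewrite mulf_eq0 orbb => /eqP.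
Qed.

Lemma sqnorm_coord_le u k : u k 0 ^+ 2 <= sqnorm u.
Proof.
rewrite /sqnorm dotvE expr2.
by apply: (@ler_sum_term _ _ xpredT (fun k => u k 0 * u k 0)) => // l _; rewrite -expr2 sqr_ge0.
Qed.

Lemma sqnormB u v : sqnorm (u - v) = sqnorm u - 2 * dotv u v + sqnorm v.
Proof. by rewrite /sqnorm !(dotvDl, dotvDr, dotvNl, dotvNr) (dotvC v u) opprK; ring. Qed.

Lemma sqnormD_le u v : sqnorm (u + v) <= 2 * sqnorm u + 2 * sqnorm v.
Proof.
have := sqnorm_ge0 (u - v); rewrite sqnormB.
rewrite /sqnorm !(dotvDl, dotvDr) (dotvC v u); lra.
Qed.

Lemma sqnormB_le u v : sqnorm (u - v) <= 2 * sqnorm u + 2 * sqnorm v.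
Proof. by have := sqnormD_le u (- v); rewrite /sqnorm dotvNl dotvNr opprK. Qed.

Lemma sqnormB_half u v : sqnorm (u - 2^-1 *: v) = sqnorm u - dotv u v + 4^-1 * sqnorm v.
Proof. by rewrite sqnormB /sqnorm !(dotvZl, dotvZr); field. Qed.

(* Expand [sum_j sum_k a_j a_k |z_j - z_k|^2 >= 0]. *)
Lemma sqnorm_wsum_le (I : finType) (P : pred I) (a : I -> R) (z : I -> 'cV[R]_n) :
  (forall j, 0 <= a j) ->
  sqnorm (\sum_(j | P j) a j *: z j) <=
    (\sum_(j | P j) a j) * \sum_(j | P j) a j * sqnorm (z j).
Proof.
move=> a_ge0; set A := \sum_(j | P j) a j; set B := \sum_(j | P j) a j * sqnorm (z j).
have cross_ge0 : 0 <= \sum_(j | P j) \sum_(k | P k) a j * a k * sqnorm (z j - z k).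
  by apply: sumr_ge0 => j _; apply: sumr_ge0 => k _; rewrite !mulr_ge0 ?sqnorm_ge0.
have sqnorm_sum : sqnorm (\sum_(j | P j) a j *: z j) =
    \sum_(j | P j) \sum_(k | P k) a j * a k * dotv (z j) (z k).
  rewrite /sqnorm dotv_suml; apply: eq_bigr => j _.
  rewrite dotvZl dotv_sumr mulr_sumr; apply: eq_bigr => k _.
  by rewrite dotvZr; ring.
have sum_l : \sum_(j | P j) \sum_(k | P k) a j * a k * sqnorm (z j) = A * B.
  rewrite exchange_big /= mulr_suml; apply: eq_bigr => k _.
  by rewrite mulr_sumr; apply: eq_bigr => j _; ring.
have sum_r : \sum_(j | P j) \sum_(k | P k) a j * a k * sqnorm (z k) = A * B.
  rewrite mulr_suml; apply: eq_bigr => j _.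
  by rewrite mulr_sumr; apply: eq_bigr => k _; ring.
have cross_eq : \sum_(j | P j) \sum_(k | P k) a j * a k * sqnorm (z j - z k) =
    A * B + A * B - 2 * sqnorm (\sum_(j | P j) a j *: z j).
  rewrite -{1}sum_l -sum_r sqnorm_sum mulr_sumr -big_split -sumrB /=.
  apply: eq_bigr => j _; rewrite mulr_sumr -big_split -sumrB /=.
  by apply: eq_bigr => k _; rewrite sqnormB; ring.
rewrite cross_eq in cross_ge0; lra.
Qed.

End InnerProduct.

Lemma dotv_mulmx (R : realFieldType) n k (A : 'M[R]_(k, n)) u (w : 'cV[R]_k) :
  dotv w (A *m u) = dotv (A^T *m w) u.
Proof. by rewrite /dotv trmx_mul trmxK mulmxA. Qed.

Section OrthonormalRows.
Variables (R : realType) (n k : nat) (A : 'M[R]_(k, n)).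

Lemma dotv_proj u : dotv u (A^T *m (A *m u)) = sqnorm (A *m u).
Proof. by rewrite dotv_mulmx trmxK. Qed.

Hypothesis A_orth : orthonormal_rows A.

Lemma sqnorm_proj u : sqnorm (A^T *m (A *m u)) = sqnorm (A *m u).
Proof. by rewrite /sqnorm dotv_mulmx trmxK !mulmxA A_orth mul1mx. Qed.

Lemma sqnorm_mulmx_le u : sqnorm (A *m u) <= sqnorm u.
Proof. by have := sqnorm_ge0 (u - A^T *m (A *m u)); rewrite sqnormB dotv_proj sqnorm_proj; lra. Qed.

End OrthonormalRows.

Section TwoProjections.
Variables (R : realType) (n k1 k2 : nat) (A1 : 'M[R]_(k1, n)) (A2 : 'M[R]_(k2, n)).
Let Q := A1^T *m A1 + A2^T *m A2.

Lemma dotv_proj2 d : dotv d (Q *m d) = sqnorm (A1 *m d) + sqnorm (A2 *m d).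
Proof. by rewrite mulmxDl dotvDr -!mulmxA !dotv_proj. Qed.

Hypotheses (A1_orth : orthonormal_rows A1) (A2_orth : orthonormal_rows A2).

Lemma sqnorm_proj2_le d : sqnorm (Q *m d) <= 2 * dotv d (Q *m d).
Proof.
rewrite dotv_proj2 mulmxDl -!mulmxA; apply: le_trans (sqnormD_le _ _) _.
by rewrite !sqnorm_proj // mulrDr.
Qed.

End TwoProjections.

Section Weights.
Variables (R : realType) (m : nat) (f : rel 'I_m).

Definition wmin : R := (1 + m%:R)^-1.

Lemma wmin_gt0 : 0 < wmin.
Proof. by rewrite invr_gt0 ltr_pwDl. Qed.

Lemma weightC i j : weight R f i j = weight R f j i.
Proof. by rewrite /weight maxnC. Qed.

Lemma degree_le i : (degree f i <= m)%N.
Proof. by rewrite /degree; apply: leq_trans (max_card _) _; rewrite card_ord. Qed.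

Lemma weight_ge_wmin i j : wmin <= weight R f i j.
Proof.
rewrite /weight /wmin lef_pV2 ?posrE ?ltr_pwDl //.
by rewrite lerD2l ler_nat geq_max !degree_le.
Qed.

Lemma weight_ge0 i j : 0 <= weight R f i j.
Proof. exact: le_trans (ltW wmin_gt0) (weight_ge_wmin i j). Qed.

(* Each of the [degree f i] weights at [i] is at most [1 / (1 + degree f i)]. *)
Lemma sum_weight_le i : \sum_(j in neighbors f i) weight R f i j <= 1 - wmin.
Proof.
apply: (@le_trans _ _ (\sum_(j in neighbors f i) (1 + (degree f i)%:R)^-1)).
  apply: ler_sum => j _; rewrite /weight lef_pV2 ?posrE ?ltr_pwDl //.
  by rewrite lerD2l ler_nat leq_maxl.
rewrite sumr_const -/(degree f i); have d_le := degree_le i; set d := degree f i.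
have -> : (1 + d%:R)^-1 *+ d = 1 - (1 + d%:R)^-1 :> R.
  by rewrite -mulr_natr; field; rewrite lt0r_neq0 ?ltr_pwDl.
by rewrite lerD2l lerN2 /wmin lef_pV2 ?posrE ?ltr_pwDl // lerD2l ler_nat.
Qed.

Hypothesis f_sym : symmetric_graph f.

Lemma exchange_sum_neighbors (F : 'I_m -> 'I_m -> R) :
  \sum_i \sum_(j in neighbors f i) F i j = \sum_i \sum_(j in neighbors f i) F j i.
Proof.
have sum_if (G : 'I_m -> 'I_m -> R) : \sum_i \sum_(j in neighbors f i) G i j =
    \sum_i \sum_j (if f i j then G i j else 0).
  by apply: eq_bigr => i _; rewrite big_mkcond; apply: eq_bigr => j _; rewrite inE.
rewrite !sum_if exchange_big /=; apply: eq_bigr => i _; apply: eq_bigr => j _.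
case: (boolP (f i j)) => fij; first by rewrite f_sym.
by case: (boolP (f j i)) => // /f_sym; rewrite (negbTE fij).
Qed.

End Weights.

Definition energy (R : realType) (m n : nat) (v : 'I_m -> 'cV[R]_n) : R :=
  \sum_i sqnorm (v i).

Section Laplacian.
Variables (R : realType) (m n : nat) (r : 'I_m -> 'I_m -> nat)
  (C : forall i j : 'I_m, 'M[R]_(r i j, n)) (f : rel 'I_m).
Implicit Types (v p : 'I_m -> 'cV[R]_n).

Definition arc_matrix i j : 'M[R]_n := (C i j)^T *m C i j + (C j i)^T *m C j i.

Definition laplacian v i : 'cV[R]_n :=
  \sum_(j in neighbors f i) weight R f i j *: (arc_matrix i j *m (v i - v j)).

Definition consensus_step v i : 'cV[R]_n := v i - 2^-1 *: laplacian v i.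

Definition laplacian_form v : R := \sum_i dotv (v i) (laplacian v i).

Definition arc_consistent p : Prop := forall i j, f i j -> C i j *m (p i - p j) = 0.

Lemma arc_matrixC i j : arc_matrix i j = arc_matrix j i.
Proof. by rewrite /arc_matrix addrC. Qed.

Hypothesis f_sym : symmetric_graph f.

Lemma laplacian_formE v : 2 * laplacian_form v =
  \sum_i \sum_(j in neighbors f i)
    weight R f i j * dotv (v i - v j) (arc_matrix i j *m (v i - v j)).
Proof.
set q := fun i j => arc_matrix i j *m (v i - v j).
have form_l : laplacian_form v =
    \sum_i \sum_(j in neighbors f i) weight R f i j * dotv (v i) (q i j).
  by apply: eq_bigr => i _; rewrite dotv_sumr; apply: eq_bigr => j _; rewrite dotvZr.
have form_r : laplacian_form v =
    - \sum_i \sum_(j in neighbors f i) weight R f i j * dotv (v j) (q i j).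
  rewrite form_l (exchange_sum_neighbors f_sym) -sumrN; apply: eq_bigr => i _.
  rewrite -sumrN; apply: eq_bigr => j _.
  by rewrite weightC /q arc_matrixC -opprB mulmxN dotvNr mulrN.
rewrite mulr_natl mulr2n {1}form_l form_r -sumrB; apply: eq_bigr => i _.
by rewrite -sumrB; apply: eq_bigr => j _; rewrite dotvBl mulrBr.
Qed.

Lemma arc_matrix_consistent p i j :
  arc_consistent p -> f i j -> arc_matrix i j *m (p i - p j) = 0.
Proof.
move=> p_cons fij; have Cij := p_cons i j fij; have Cji := p_cons j i (f_sym fij).
by rewrite mulmxDl -!mulmxA Cij -opprB mulmxN Cji oppr0 !mulmx0 addr0.
Qed.

Lemma consensus_step_sub v p : arc_consistent p ->
  forall i, consensus_step v i - p i = consensus_step (fun k => v k - p k) i.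
Proof.
move=> p_cons i; rewrite /consensus_step /laplacian addrAC; congr (_ - 2^-1 *: _).
apply: eq_bigr => j; rewrite inE => fij /=; congr (_ *: _).
have Qp : arc_matrix i j *m p i = arc_matrix i j *m p j.
  by apply/eqP; rewrite -subr_eq0 -mulmxBr arc_matrix_consistent.
by rewrite !mulmxBr Qp opprB addrA subrK.
Qed.

Lemma dotv_arc_matrix v i j :
  dotv (v i - v j) (arc_matrix i j *m (v i - v j)) =
    sqnorm (C i j *m (v i - v j)) + sqnorm (C j i *m (v i - v j)).
Proof. exact: dotv_proj2. Qed.

Lemma weighted_arc_ge0 v i j :
  0 <= weight R f i j * dotv (v i - v j) (arc_matrix i j *m (v i - v j)).
Proof. by rewrite mulr_ge0 ?weight_ge0 // dotv_arc_matrix addr_ge0 ?sqnorm_ge0. Qed.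

Lemma laplacian_form_ge0 v : 0 <= laplacian_form v.
Proof.
suff : 0 <= 2 * laplacian_form v by rewrite pmulr_rge0.
by rewrite laplacian_formE; do 2!apply: sumr_ge0 => ? _; exact: weighted_arc_ge0.
Qed.

Lemma laplacian_form_ge v i j : f i j ->
  wmin R m / 2 * sqnorm (C i j *m (v i - v j)) <= laplacian_form v.
Proof.
move=> fij; suff : wmin R m * sqnorm (C i j *m (v i - v j)) <= 2 * laplacian_form v by lra.
rewrite laplacian_formE.
apply: le_trans (@ler_sum_term _ _ xpredT _ i isT _); last first.
  by move=> k _; apply: sumr_ge0 => l _; exact: weighted_arc_ge0.
apply: le_trans (@ler_sum_term _ _ (fun l => l \in neighbors f i) _ j _ _); last first.
- by move=> l _; exact: weighted_arc_ge0.
- by rewrite inE.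
rewrite dotv_arc_matrix; apply: ler_pM; rewrite ?(ltW (wmin_gt0 R m)) ?sqnorm_ge0 //.
  exact: weight_ge_wmin.
by rewrite lerDl sqnorm_ge0.
Qed.

Hypothesis f_orth : forall i j, f i j -> orthonormal_rows (C i j).

Lemma sum_sqnorm_laplacian_le v :
  \sum_i sqnorm (laplacian v i) <= 4 * (1 - wmin R m) * laplacian_form v.
Proof.
rewrite (_ : 4 * _ * _ = (1 - wmin R m) * (2 * (2 * laplacian_form v))); last by ring.
rewrite laplacian_formE mulr_sumr mulr_sumr; apply: ler_sum => i _.
rewrite /laplacian.
apply: le_trans (sqnorm_wsum_le (fun j => j \in neighbors f i) _ (weight_ge0 R f i)) _.
apply: ler_pM.
- by apply: sumr_ge0 => j _; exact: weight_ge0.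
- by apply: sumr_ge0 => j _; rewrite mulr_ge0 ?weight_ge0 ?sqnorm_ge0.
- exact: sum_weight_le.
rewrite mulr_sumr; apply: ler_sum => j; rewrite inE => fij.
rewrite mulrCA; apply: ler_wpM2l; first exact: weight_ge0.
by apply: sqnorm_proj2_le; apply: f_orth; rewrite // f_sym.
Qed.

Lemma energy_consensus_step v :
  energy (consensus_step v) + wmin R m * laplacian_form v <= energy v.
Proof.
have -> : energy (consensus_step v) =
    energy v - laplacian_form v + 4^-1 * \sum_i sqnorm (laplacian v i).
  rewrite /energy /laplacian_form mulr_sumr -sumrB -big_split /=.
  by apply: eq_bigr => i _; rewrite sqnormB_half.
have := sum_sqnorm_laplacian_le v; have := laplacian_form_ge0 v; lra.
Qed.

End Laplacian.

Section Energy.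
Variables (R : realType) (m n : nat).
Implicit Types (v p : 'I_m -> 'cV[R]_n).

Lemma energy_ge0 v : 0 <= energy v.
Proof. by apply: sumr_ge0 => i _; exact: sqnorm_ge0. Qed.

Lemma sqnorm_le_energy v i : sqnorm (v i) <= energy v.
Proof. by apply: (@ler_sum_term _ _ xpredT (fun i => sqnorm (v i))) => // k _; exact: sqnorm_ge0. Qed.

Lemma coord_sqr_le_energy v i k : v i k 0 ^+ 2 <= energy v.
Proof. exact: le_trans (sqnorm_coord_le _ k) (sqnorm_le_energy v i). Qed.

Lemma energy_le_coord_bound v b : (forall i k, `|v i k 0| <= b) ->
  energy v <= (m * n)%:R * b ^+ 2.
Proof.
move=> v_le; apply: (@le_trans _ _ (\sum_(i < m) \sum_(k < n) b ^+ 2)).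
  apply: ler_sum => i _; rewrite /sqnorm dotvE; apply: ler_sum => k _.
  apply: le_trans (ler_norm _) _; rewrite normrM expr2.
  by apply: ler_pM; rewrite ?normr_ge0 ?v_le.
by rewrite !sumr_const !card_ord -mulrnA mulr_natl mulnC.
Qed.

Lemma sqnorm_arc_gap_le k (A : 'M[R]_(k, n)) v p i j : orthonormal_rows A ->
  sqnorm (A *m (p i - p j)) <=
    2 * sqnorm (A *m (v i - v j)) + 8 * energy (fun l => v l - p l).
Proof.
move=> A_orth.
have -> : p i - p j = (v i - v j) - ((v i - p i) - (v j - p j)).
  by apply/matrixP => a b; rewrite !mxE; ring.
have A_le := sqnorm_mulmx_le A_orth ((v i - p i) - (v j - p j)).
have diff_le := sqnormB_le (v i - p i) (v j - p j).
have vi_le := sqnorm_le_energy (fun l => v l - p l) i.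
have vj_le := sqnorm_le_energy (fun l => v l - p l) j.
rewrite /= in vi_le vj_le; rewrite mulmxBr; apply: le_trans (sqnormB_le _ _) _; lra.
Qed.

End Energy.

Local Open Scope classical_set_scope.
Local Open Scope ring_scope.

Lemma bounded_has_cluster (R : realType) (m n : nat) (x : nat -> 'I_m -> 'cV[R]_n) (B : R) :
  (forall t i k, `|x t i k 0| <= B) ->
  exists p : 'I_m -> 'cV[R]_n, forall d, 0 < d -> forall N,
    exists2 t, (N <= t)%N & energy (fun i => x t i - p i) < d.
Proof.
move=> x_le.
(* Flatten the families into [m * n]-vectors, so that the box [[-B, B]^(m n)] is compact. *)
pose X t : 'rV[R]_(m * n) := mxvec (\matrix_(i, k) x t i k 0).
have XE t i k : X t 0 (mxvec_index i k) = x t i k 0 by rewrite mxvecE mxE.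
pose K := [set v : 'rV[R]_(m * n) | forall l, (`[- B, B]%classic : set R) (v 0 l)].
have K_compact : compact K.
  by apply: (@rV_compact _ _ (fun _ => `[- B, B]%classic)) => _; exact: segment_compact.
have X_K : (X @ \oo) K.
  rewrite /=; apply: filterE => t l /=; case/mxvec_indexP: l => i k.
  by rewrite XE in_itv /= -ler_norml.
have [q [_ q_cluster]] := K_compact (X @ \oo) _ X_K.
exists (fun i => \col_k (vec_mx q) i k) => d d_gt0 N.
set M : R := (m * n)%:R; pose eps := Num.sqrt (d / (M + 1)).
have M1_gt0 : 0 < M + 1 by rewrite ltr_pwDr.
have eps_gt0 : 0 < eps by rewrite sqrtr_gt0 divr_gt0.
have X_tail : (X @ \oo) [set X t | t in [set t | (N <= t)%N]].
  by apply: filterS (nbhs_infty_ge N) => t Nt; exists t.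
have q_ball : nbhs q (ball q eps) by exact: nbhsx_ballx.
case: (q_cluster _ _ X_tail q_ball) => _ [[t Nt <-] [_ near_q]].
exists t => //; apply: le_lt_trans (energy_le_coord_bound (b := eps) _) _.
  move=> i k; have := near_q 0 (mxvec_index i k); rewrite /ball /= XE.
  by rewrite -[in X in X - _](vec_mxK q) mxvecE !mxE distrC => /ltW.
rewrite sqr_sqrtr ?divr_ge0 ?ltW // -/M.
have dE : d = d / (M + 1) * (M + 1) by rewrite divfK ?lt0r_neq0.
have : 0 < d / (M + 1) by rewrite divr_gt0.
set a := d / (M + 1) in dE *; lra.
Qed.

Section Trajectory.
Variables (R : realType) (m n : nat) (r : 'I_m -> 'I_m -> nat)
  (C : forall i j : 'I_m, 'M[R]_(r i j, n)) (Nt : nat -> rel 'I_m)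
  (x : nat -> 'I_m -> 'cV[R]_n).
Hypothesis Nt_sym : forall t, symmetric_graph (Nt t).
Hypothesis Nt_orth : forall t i j, Nt t i j -> orthonormal_rows (C i j).
Hypothesis x_step : forall t i, x t.+1 i = consensus_step C (Nt t) (x t) i.

Lemma energy_trajectory_step t :
  energy (x t.+1) + wmin R m * laplacian_form C (Nt t) (x t) <= energy (x t).
Proof.
have -> : x t.+1 = consensus_step C (Nt t) (x t) by apply: funext => i; exact: x_step.
exact: energy_consensus_step (@Nt_sym t) (@Nt_orth t) (x t).
Qed.

Lemma energy_trajectory_nonincreasing : nonincreasing_seq (fun t => energy (x t)).
Proof.
apply/nonincreasing_seqP => t; apply: le_trans (energy_trajectory_step t).
by rewrite lerDl mulr_ge0 ?(laplacian_form_ge0 C (@Nt_sym t)) ?ltW ?wmin_gt0.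
Qed.

Lemma energy_drop_lt eta : 0 < eta ->
  \forall t \near \oo, energy (x t) - energy (x t.+1) < eta.
Proof.
move=> eta_gt0; set E := fun t => energy (x t).
have E_cvg : cvgn E.
  apply: nonincreasing_is_cvgn; first exact: energy_trajectory_nonincreasing.
  by exists 0 => _ [t _ <-]; exact: energy_ge0.
have drop_cvg : (fun t => E t - E t.+1) @ \oo --> 0.
  by rewrite -(subrr (limn E)); apply: cvgB => //; rewrite cvg_shiftS.
by apply: filterS (cvgr0_norm_lt _ drop_cvg _ eta_gt0) => t /=; exact: le_lt_trans (ler_norm _).
Qed.

Lemma trajectory_coord_bounded t i k : `|x t i k 0| <= Num.sqrt (energy (x 0)).
Proof.
rewrite -sqrtr_sqr; apply: ler_wsqrtr; apply: le_trans (coord_sqr_le_energy _ i k) _.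
by have := energy_trajectory_nonincreasing (leq0n t).
Qed.

Lemma arc_dissipation t i j : Nt t i j ->
  wmin R m ^+ 2 / 2 * sqnorm (C i j *m (x t i - x t j)) <= energy (x t) - energy (x t.+1).
Proof.
move=> Ntij; have w_gt0 := wmin_gt0 R m.
have := laplacian_form_ge C (@Nt_sym t) (x t) Ntij.
rewrite -(ler_pM2l w_gt0) => form_ge; have := energy_trajectory_step t.
rewrite (_ : _ ^+ 2 / 2 * _ = wmin R m * (wmin R m / 2 * sqnorm (C i j *m (x t i - x t j)))).
  by lra.
by rewrite expr2; ring.
Qed.

Section ClusterPoint.
Variable p : 'I_m -> 'cV[R]_n.
Hypothesis p_cluster : forall d, 0 < d -> forall N,
  exists2 t, (N <= t)%N & energy (fun i => x t i - p i) < d.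

Let dist t := energy (fun i => x t i - p i).

Lemma dist_step_le t : arc_consistent C (Nt t) p -> dist t.+1 <= dist t.
Proof.
move=> p_cons.
have -> : dist t.+1 = energy (consensus_step C (Nt t) (fun i => x t i - p i)).
  by apply: eq_bigr => i _; rewrite x_step (consensus_step_sub (@Nt_sym t) _ p_cons).
apply: le_trans (energy_consensus_step (@Nt_sym t) (@Nt_orth t) _).
by rewrite lerDl mulr_ge0 ?(laplacian_form_ge0 C (@Nt_sym t)) ?ltW ?wmin_gt0.
Qed.

Let gap i j := sqnorm (C i j *m (p i - p j)).

Let gap_min := \big[Order.min/1]_(ij : 'I_m * 'I_m | gap ij.1 ij.2 != 0) gap ij.1 ij.2.

Lemma gap_min_gt0 : 0 < gap_min.
Proof.
apply: lt_bigmin => [|ij gap_nz]; first exact: ltr01.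
by rewrite lt0r gap_nz sqnorm_ge0.
Qed.

Let c := wmin R m ^+ 2 / 2.

Lemma c_gt0 : 0 < c.
Proof. by rewrite divr_gt0 ?exprn_gt0 ?wmin_gt0. Qed.

Lemma arcs_consistent_near_cluster t :
  dist t < gap_min / 16 -> energy (x t) - energy (x t.+1) < c * gap_min / 8 ->
  arc_consistent C (Nt t) p.
Proof.
move=> dist_lt drop_lt i j Ntij; apply/eqP; rewrite -sqnorm_eq0.
apply/negPn/negP => gap_nz.
have gap_ge : gap_min <= gap i j by exact: (@bigmin_le_cond _ _ _ _ (i, j)).
have s_lt : sqnorm (C i j *m (x t i - x t j)) < gap_min / 8.
  rewrite -(ltr_pM2l c_gt0); apply: le_lt_trans (arc_dissipation Ntij) _.
  by rewrite mulrA.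
(* Then [gap i j <= 2 * (gap_min / 8) + 8 * (gap_min / 16) < gap_min]. *)
have := sqnorm_arc_gap_le (x t) p i j (Nt_orth Ntij).
have := gap_min_gt0; rewrite -/(dist t) -/(gap i j); lra.
Qed.

Variable e : rel 'I_m.
Hypothesis Nt_recurrent :
  forall i j, e i j -> forall T : nat, exists2 t : nat, (T <= t)%N & Nt t i j.

(* Once [x] is close to [p] and the energy drops are small, [dist] stays small,
   so every arc active from then on is consistent. *)
Lemma cluster_arc_consistent : arc_consistent C e p.
Proof.
have [N _ drop_lt] := energy_drop_lt (divr_gt0 (mulr_gt0 c_gt0 gap_min_gt0) (ltr0n R 8)).
have [t0 Nt0 dist_t0] := p_cluster (divr_gt0 gap_min_gt0 (ltr0n R 16)) N.
have near_cons s : (t0 <= s)%N -> dist s < gap_min / 16 -> arc_consistent C (Nt s) p.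
  move=> t0s dist_s; apply: arcs_consistent_near_cluster => //.
  by apply: drop_lt; exact: leq_trans t0s.
have dist_small d : dist (t0 + d) < gap_min / 16.
  elim: d => [|d IH]; first by rewrite addn0.
  by rewrite addnS; apply: le_lt_trans (dist_step_le (near_cons _ (leq_addr _ _) IH)) IH.
move=> i j eij; have [s t0s Ntij] := Nt_recurrent eij t0.
by apply: (near_cons s t0s) => //; rewrite -(subnKC t0s); exact: dist_small.
Qed.

Hypothesis Nt_sub : forall t, spanning_subgraph (Nt t) e.

Lemma trajectory_cvg_cluster : arc_consistent C e p ->
  forall i, (fun t => x t i) @ \oo --> p i.
Proof.
move=> p_cons i.
have dist_mono : nonincreasing_seq dist.
  apply/nonincreasing_seqP => t; apply: dist_step_le => k l Ntkl.
  exact: p_cons (Nt_sub Ntkl).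
apply/cvg_ballP => eps eps_gt0.
have [t0 _ dist_t0] := p_cluster (exprn_gt0 2 eps_gt0) 0.
apply: filterS (nbhs_infty_ge t0) => t t0t; split => // k l; rewrite (ord1 l) /ball /=.
have coord_lt : (x t i k 0 - p i k 0) ^+ 2 < eps ^+ 2.
  have := le_lt_trans (coord_sqr_le_energy (fun i => x t i - p i) i k)
                      (le_lt_trans (dist_mono _ _ t0t) dist_t0).
  by rewrite !mxE.
have := real_normK (num_real (x t i k 0 - p i k 0)).
have := normr_ge0 (x t i k 0 - p i k 0).
rewrite distrC; nra.
Qed.

End ClusterPoint.
End Trajectory.

Theorem theorem6 (R : realType) (m n : nat) (e : rel 'I_m)
  (r : 'I_m -> 'I_m -> nat) (C : forall i j : 'I_m, 'M[R]_(r i j, n))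
  (Nt : nat -> rel 'I_m) (x : nat -> 'I_m -> 'cV[R]_n) :
  symmetric_graph e ->
  no_self_arcs e ->
  strongly_connected e ->
  (forall i j, e i j -> orthonormal_rows (C i j)) ->
  well_configured e C ->
  (forall t, symmetric_graph (Nt t)) ->
  (forall t, spanning_subgraph (Nt t) e) ->
  (forall i j, e i j -> forall T : nat, exists2 t : nat, (T <= t)%N & Nt t i j) ->
  (forall t i, x t.+1 i =
     x t i - 2^-1 *: \sum_(j in neighbors (Nt t) i)
        weight R (Nt t) i j *:
          (((C i j)^T *m C i j + (C j i)^T *m C j i) *m (x t i - x t j))) ->
  exists xs : 'cV[R]_n, forall i, (fun t => x t i) @ \oo --> xs.
Proof.
move=> _ _ _ e_orth e_wc Nt_sym Nt_sub Nt_rec x_step.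
have Nt_orth t i j : Nt t i j -> orthonormal_rows (C i j).
  by move=> /Nt_sub; exact: e_orth.
have [p p_cluster] := bounded_has_cluster (trajectory_coord_bounded Nt_sym Nt_orth x_step).
have p_cons := cluster_arc_consistent Nt_sym Nt_orth x_step p_cluster Nt_rec.
have p_const i j : p i = p j.
  apply: e_wc => k l elk; apply/eqP; rewrite eq_sym -subr_eq0 -mulmxBr.
  by rewrite p_cons.
have [m0|m_gt0] := posnP m; first by exists 0 => i; exfalso; case: i => i; rewrite m0.
exists (p (Ordinal m_gt0)) => i; rewrite -(p_const i).
exact: (trajectory_cvg_cluster Nt_sym Nt_orth x_step p_cluster Nt_sub p_cons (i := i)).
Qed.
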